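(* Let $f$ be a PSR with core test sets $\{\mathcal{U}_h\}_{h\in[H]}$ such that every $o\in\mathcal{O}$ (as a length-one test) belongs to $\mathcal{U}_H$, with parameters $\{M_{o,a,h;f},q_{0;f}\}$ and $m_{o,H;f}=e_{o}$ (the standard basis vector of $\mathbb{R}^{|\mathcal{U}_H|}$ indexing $o$). Define new parameters $\{M_{o,a,h;f'},q_{0;f}\}$ by letting, for all $o\in\mathcal{O},a\in\mathcal{A},h\in[H-1],u\in\mathcal{U}_{h+1}$, the row $m_{(o,a,u),h;f'}$ be the orthogonal projection of $m_{(o,a,u),h;f}$ onto the column space of $K_{h-1;f}$, and set $\mathbb{P}^\pi_{f'}(\tau_H):=e_{o_H}^\top M_{o_{H-1},a_{H-1},H-1;f'}\cdots M_{o_1,a_1,1;f'}q_{0;f}\,\pi(\tau_H)$. Then $\mathbb{P}^\pi_f(\tau_H)=\mathbb{P}^\pi_{f'}(\tau_H)$ for every trajectory $\tau_H$ and every policy $\pi$.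
   Context: Process (model $f$) with finite $\mathcal{O},\mathcal{A}$, horizon $H$; histories $\tau_h=(o_1,a_1,\dots,o_h,a_h)$; a policy $\pi$ picks $a_h\sim\pi_h(\cdot\mid\tau_{h-1},o_h)$, $\pi(\tau_h)=\prod_{l\le h}\pi_l(a_l\mid\tau_{l-1},o_l)$, $\mathbb{P}^\pi_f(\tau_h)$ is the probability of $\tau_h$ under $\pi$ in $f$. A test starting at step $h$ is $t=(o_h,\dots,o_{h+W-1},a_h,\dots,a_{h+W-2})$; $\mathbb{P}_f(t\mid\tau_{h-1})$ is the probability of observing $o_{h:h+W-1}$ when executing $a_{h:h+W-2}$ after $\tau_{h-1}$ ($0$ if unreachable). A set $\mathcal{U}_h$ of tests starting at $h$ is a core test set if for every test $t$ starting at $h$ there is a history-independent $m_{t,h;f}$ with $\mathbb{P}_f(t\mid\tau_{h-1})=\langle m_{t,h;f},q_{\tau_{h-1};f}\rangle$, $q_{\tau_{h-1};f}=[\mathbb{P}_f(u\mid\tau_{h-1})]_{u\in\mathcal{U}_h}$; $q_{0;f}=[\mathbb{P}_f(u)]_{u\in\mathcal{U}_1}$; $M_{o,a,h;f}$ has rows $m_{(o,a,u),h;f}^\top$, $u\in\mathcal{U}_{h+1}$. Let $d_{\mathrm{PSR},h}$ be the rank of the matrix with entries $\mathbb{P}_f(t\mid\tau_h)$ (rows: tests starting at $h+1$; columns: histories $\tau_h$). Core matrix: for $h\ge1$, $K_{h;f}$ has columns $q_{\tau_h^1;f},\dots,q_{\tau_h^{d_{\mathrm{PSR},h}};f}$ for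 histories whose predictive states span all $q_{\tau_h;f}$ (chosen to minimize $\|K_{h;f}^\dagger\|_{1\to1}$); $K_{0;f}=q_{0;f}$. *)

From HB Require Import structures.
From mathcomp Require Import all_boot all_order all_algebra.
Set Implicit Arguments. Unset Strict Implicit. Unset Printing Implicit Defensive.
Import Order.TTheory GRing.Theory Num.Theory.
Local Open Scope ring_scope.

Section PSR.
Variables (R : realFieldType) (O A : finType).

Definition hist := seq (O * A).
(* A test (o_h..o_{h+W-1}, a_h..a_{h+W-2}) *)
Definition test := (seq O * seq A)%type.
(* A model f : conditional law of o_h given tau_{h-1} *)
Definition kernel := hist -> O -> R.
(* A policy pi_h(a_h | tau_{h-1}, o_h) *)
Definition policy := hist -> O -> A -> R.

Definition is_model (H : nat) (f : kernel) :=
  forall tau : hist, (size tau < H)%N ->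
    (forall o, 0 <= f tau o) /\ \sum_o f tau o = 1.

Definition is_policy (H : nat) (pi : policy) :=
  forall (tau : hist) (o : O), (size tau < H)%N ->
    (forall a, 0 <= pi tau o a) /\ \sum_a pi tau o a = 1.

Fixpoint seqP (f : kernel) (tau : hist) (os : seq O) (as_ : seq A) : R :=
  match os, as_ with
  | [::], _ => 1
  | [:: o], _ => f tau o
  | o :: os', a :: as' => f tau o * seqP f (rcons tau (o, a)) os' as'
  | _ :: _, [::] => 0
  end.

Definition histP (f : kernel) (tau : hist) : R :=
  seqP f [::] (unzip1 tau) (unzip2 tau).

(* P_f(t | tau), 0 if tau unreachable *)
Definition Ptest (f : kernel) (t : test) (tau : hist) : R :=
  if histP f tau == 0 then 0 else seqP f tau t.1 t.2.

(* P^pi_f(tau) (tau0 = already executed prefix) *)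
Fixpoint trajP (f : kernel) (pi : policy) (tau0 tau : hist) : R :=
  match tau with
  | [::] => 1
  | (o, a) :: tau' => f tau0 o * pi tau0 o a * trajP f pi (rcons tau0 (o, a)) tau'
  end.

Fixpoint polP (pi : policy) (tau0 tau : hist) : R :=
  match tau with
  | [::] => 1
  | (o, a) :: tau' => pi tau0 o a * polP pi (rcons tau0 (o, a)) tau'
  end.

Definition is_test (H h : nat) (t : test) : bool :=
  [&& (0 < size t.1)%N, size t.2 == (size t.1).-1 & (h + size t.1 <= H.+1)%N].

Definition test0 : test := ([::], [::]).

(* orthogonal projection (acting on row vectors) onto the column space of K *)
Definition orthproj n k (K : 'M[R]_(n, k)) : 'M[R]_n := proj_mx (<<K^T>>)%MS (kermx K).

Section Params.
Variables (f : kernel) (U : nat -> seq test)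
  (m : forall h, test -> 'rV[R]_(size (U h))).

Definition qv (h : nat) (tau : hist) : 'cV[R]_(size (U h)) :=
  \col_i Ptest f (nth test0 (U h) i) tau.

Definition Mmx (h : nat) (o : O) (a : A) : 'M[R]_(size (U h.+1), size (U h)) :=
  \matrix_(i, j) m h (o :: (nth test0 (U h.+1) i).1,
                      a :: (nth test0 (U h.+1) i).2) 0 j.

(* Kc h plays the role of K_{h-1;f} *)
Variables (k : nat -> nat) (Kc : forall h, 'M[R]_(size (U h), k h)).

Definition Mmx' (h : nat) (o : O) (a : A) : 'M[R]_(size (U h.+1), size (U h)) :=
  Mmx h o a *m orthproj (Kc h).

(* for r = rev (tau_l): M'_{o_l,a_l,l} ... M'_{o_1,a_1,1} q_0 *)
Fixpoint pstate (r : hist) : 'cV[R]_(size (U (size r).+1)) :=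
  match r return 'cV[R]_(size (U (size r).+1)) with
  | [::] => qv 1 [::]
  | x :: l => Mmx' (size l).+1 x.1 x.2 *m pstate l
  end.

Definition readout (n : nat) (v : 'cV[R]_(size (U n))) (t : test) : R :=
  match (insub (index t (U n)) : option 'I_(size (U n))) with
  | Some i => v i 0
  | None => 0
  end.

Definition Pf' (pi : policy) (tau' : hist) (oH : O) (aH : A) : R :=
  readout (pstate (rev tau')) ([:: oH], [::]) * polP pi [::] (rcons tau' (oH, aH)).

End Params.
End PSR.

From HB Require Import structures.
From mathcomp Require Import all_boot all_order all_algebra.
Set Implicit Arguments. Unset Strict Implicit. Unset Printing Implicit Defensive.
Import Order.TTheory GRing.Theory Num.Theory.
Local Open Scope ring_scope.

(* By induction on the history, the product M'_{o_l,a_l,l} ... M'_{o_1,a_1,1} q_0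
   equals the unnormalised predictive state P_f(o_{1:l} | a_{1:l}) q_{tau_l}.
   The unprojected matrices map this vector to the next unnormalised predictive
   state by the linear representation of test probabilities, and since q_{tau_l}
   lies in the column space of K_{l;f}, which the projection fixes, projecting
   the rows changes nothing.  Reading off the coordinate o_H at the last step
   gives P_f(o_{1:H} | a_{1:H-1}), and multiplying by pi(tau_H) gives the
   probability of the trajectory.  The hypothesis m_{o,H} = e_o is unused, as
   the readout takes the o_H-coordinate directly; so is the stochasticity of
   f and pi. *)

Lemma mulmx_trmx_self_eq0 (R : realDomainType) n (v : 'rV[R]_n) :
  v *m v^T = 0 -> v = 0.
Proof.
move=> /(congr1 (fun M : 'M_1 => M 0 0)); rewrite !mxE => /eqP.
rewrite psumr_eq0 => [/allP vv0|j _]; last by rewrite mxE -expr2 sqr_ge0.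
apply/rowP => j; move: (vv0 j (mem_index_enum j)).
by rewrite mxE mulf_eq0 orbb => /eqP ->; rewrite mxE.
Qed.

Section OrthogonalProjection.
Variable R : realFieldType.

Lemma capmx_tr_kermx n k (K : 'M[R]_(n, k)) : (<<K^T>> :&: kermx K)%MS = 0.
Proof.
apply/eqP; rewrite -submx0; apply/rV_subP => v.
rewrite sub_capmx genmxE sub_kermx => /andP[/submxP[w ->] /eqP wKK0].
rewrite submx0; apply/eqP/mulmx_trmx_self_eq0.
by rewrite trmx_mul trmxK mulmxA wKK0 mul0mx.
Qed.

Lemma orthproj_id n k (K : 'M[R]_(n, k)) (b : 'cV_n) :
  (b^T <= K^T)%MS -> orthproj K *m b = b.
Proof.
move=> /submxP[d /(congr1 trmx)]; rewrite trmx_mul !trmxK => ->.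
have full : row_full (<<K^T>> + kermx K)%MS.
  rewrite /row_full mxrank_disjoint_sum ?capmx_tr_kermx //.
  by rewrite genmxE mxrank_tr mxrank_ker subnKC ?rank_leq_row.
(* The rows of 1 - orthproj K lie in kermx K. *)
have /sub_kermxP compl_K0 := proj_mx_compl_sub (submx_full 1%:M full).
suff PK : orthproj K *m K = K by rewrite mulmxA PK.
apply/eqP; rewrite -subr_eq0 -[X in _ - X]mul1mx -mulmxBl -opprB mulNmx.
by rewrite -[orthproj K]mul1mx compl_K0 oppr0.
Qed.

End OrthogonalProjection.

Section HistoryProbabilities.
Variables (R : realFieldType) (O A : finType) (f : kernel R O A).

Lemma seqP_cons (tau : hist O A) o a os as_ :
  seqP f tau (o :: os) (a :: as_) = f tau o * seqP f (rcons tau (o, a)) os as_.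
Proof. by case: os => [|o' os] /=; rewrite ?mulr1. Qed.

Lemma seqP_unzip_rcons (tau0 tau : hist O A) x :
  seqP f tau0 (unzip1 (rcons tau x)) (unzip2 (rcons tau x)) =
  seqP f tau0 (unzip1 tau) (unzip2 tau) * f (tau0 ++ tau) x.1.
Proof.
elim: tau tau0 => [|[o a] tau IH] tau0; first by rewrite /= mul1r cats0.
by rewrite rcons_cons [unzip1 _]/= [unzip2 _]/= !seqP_cons IH mulrA cat_rcons.
Qed.

Lemma histP_rcons (tau : hist O A) x : histP f (rcons tau x) = histP f tau * f tau x.1.
Proof. exact: seqP_unzip_rcons. Qed.

Lemma trajP_seqP (pi : policy R O A) (tau0 tau : hist O A) :
  trajP f pi tau0 tau = seqP f tau0 (unzip1 tau) (unzip2 tau) * polP pi tau0 tau.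
Proof.
elim: tau tau0 => [|[o a] tau IH] tau0; first by rewrite /= mulr1.
by rewrite [LHS]/= [unzip1 _]/= [unzip2 _]/= IH seqP_cons mulrACA.
Qed.

Lemma histP_mul_Ptest (t : test O A) (tau : hist O A) :
  histP f tau * Ptest f t tau = histP f tau * seqP f tau t.1 t.2.
Proof. by rewrite /Ptest; case: eqP => [->|]; rewrite ?mul0r. Qed.

Lemma histP_mul_Ptest_cons (t : test O A) (tau : hist O A) o a :
  histP f tau * Ptest f (o :: t.1, a :: t.2) tau =
  histP f (rcons tau (o, a)) * Ptest f t (rcons tau (o, a)).
Proof. by rewrite !histP_mul_Ptest seqP_cons histP_rcons mulrA. Qed.

End HistoryProbabilities.

Lemma is_test_cons (O A : finType) (H h : nat) (t : test O A) o a :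
  is_test H h.+1 t -> is_test H h (o :: t.1, a :: t.2).
Proof.
case: t => [[|o1 os] as_] //; rewrite /is_test /= => /andP[eq_as le_H].
by rewrite eqSS eq_as -addSnnS.
Qed.

Section Readout.
Variables (R : realFieldType) (O A : finType) (U : nat -> seq (test O A)) (n : nat).

Lemma readoutZ c (v : 'cV[R]_(size (U n))) t : readout (c *: v) t = c * readout v t.
Proof. by rewrite /readout; case: insubP => [i _ _|_]; rewrite ?mxE ?mulr0. Qed.

Lemma readout_qv (f : kernel R O A) tau t : t \in U n -> readout (qv f U n tau) t = Ptest f t tau.
Proof.
move=> t_in; rewrite /readout; case: insubP => [i _ i_idx|]; last by rewrite index_mem t_in.
by rewrite mxE i_idx nth_index.
Qed.

End Readout.

Section PredictiveStates.
Variables (R : realFieldType) (O A : finType) (H : nat) (f : kernel R O A).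
Variables (U : nat -> seq (test O A)) (m : forall h, test O A -> 'rV[R]_(size (U h))).
Variables (k : nat -> nat) (Kc : forall h, 'M[R]_(size (U h), k h)).

Hypothesis U_tests : forall h, (1 <= h <= H)%N -> all (is_test H h) (U h).
Hypothesis Ptest_linear : forall h, (1 <= h <= H)%N -> forall t, is_test H h t ->
  forall tau : hist O A, size tau = h.-1 -> Ptest f t tau = (m h t *m qv f U h tau) 0 0.
Hypothesis qv_sub_Kc : forall h, (1 <= h < H)%N ->
  forall tau : hist O A, size tau = h.-1 -> ((qv f U h tau)^T <= (Kc h)^T)%MS.

Lemma mulmx_Mmx_qv h o a (tau : hist O A) : (1 <= h < H)%N -> size tau = h.-1 ->
  Mmx m h o a *m qv f U h tau =
  \col_i Ptest f (o :: (nth (test0 O A) (U h.+1) i).1, a :: (nth (test0 O A) (U h.+1) i).2) tau.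
Proof.
move=> /andP[h_gt0 h_lt] size_tau; apply/colP => i; rewrite [RHS]mxE.
set u := nth _ _ i.
have hS_range : (1 <= h.+1 <= H)%N by [].
have u_test : is_test H h.+1 u by apply: (allP (U_tests hS_range)); apply: mem_nth.
have row_Mmx : row i (Mmx m h o a) = m h (o :: u.1, a :: u.2) by apply/rowP => j; rewrite !mxE.
rewrite (@Ptest_linear h _ _ (is_test_cons o a u_test) _ size_tau); last by rewrite h_gt0 ltnW.
by rewrite -row_Mmx -row_mul [RHS]mxE.
Qed.

Lemma pstate_histP (r : hist O A) : (size r < H)%N ->
  pstate f m Kc r = histP f (rev r) *: qv f U (size r).+1 (rev r).
Proof.
elim: r => [_|[o a] l IH size_lt]; first by rewrite [histP _ _]/= scale1r; reflexivity.
have l_range : (1 <= (size l).+1 < H)%N := size_lt.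
rewrite [pstate _ _ _ _]/= IH; last exact: ltnW.
rewrite /Mmx' -scalemxAr -mulmxA orthproj_id; last by rewrite qv_sub_Kc ?size_rev.
rewrite mulmx_Mmx_qv ?size_rev // rev_cons; apply/colP => i.
by rewrite !mxE histP_mul_Ptest_cons.
Qed.

End PredictiveStates.

Theorem lemma6 (R : realFieldType) (O A : finType) (H : nat)
  (f : kernel R O A) (U : nat -> seq (test O A))
  (m : forall h, test O A -> 'rV[R]_(size (U h)))
  (k : nat -> nat) (Kc : forall h, 'M[R]_(size (U h), k h)) :
  (0 < H)%N ->
  is_model H f ->
  (* core test sets: finite sets of tests starting at h *)
  (forall h, (1 <= h <= H)%N -> uniq (U h) /\ all (is_test H h) (U h)) ->
  (* linear representation of all test probabilities *)
  (forall h, (1 <= h <= H)%N -> forall t, is_test H h t ->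
     forall tau : hist O A, size tau = h.-1 ->
       Ptest f t tau = (m h t *m qv f U h tau) 0 0) ->
  (* every observation is a core test at step H, with m_{o,H} = e_o *)
  (forall o : O, ([:: o], [::]) \in U H) ->
  (forall (o : O) (i : 'I_(size (U H))),
     nth (test0 O A) (U H) i = ([:: o], [::]) -> m H ([:: o], [::]) = delta_mx 0 i) ->
  (* Kc h = K_{h-1;f}: columns are predictive states q_{tau_{h-1}} spanning all of them *)
  (forall h, (1 <= h < H)%N ->
     (forall j, exists tau : hist O A, size tau = h.-1 /\ col j (Kc h) = qv f U h tau) /\
     (forall tau : hist O A, size tau = h.-1 -> ((qv f U h tau)^T <= (Kc h)^T)%MS)) ->
  forall pi : policy R O A, is_policy H pi ->
  forall (tau' : hist O A) (oH : O) (aH : A), size tau' = H.-1 ->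
    trajP f pi [::] (rcons tau' (oH, aH)) = Pf' f m Kc pi tau' oH aH.
Proof.
move=> H_gt0 _ U_core Ptest_linear U_obs _ Kc_core pi _ tau' oH aH size_tau'.
have U_tests h (h_range : (1 <= h <= H)%N) := (U_core h h_range).2.
have qv_sub_Kc h (h_range : (1 <= h < H)%N) := (Kc_core h h_range).2.
have size_rev_tau' : (size (rev tau')).+1 = H by rewrite size_rev size_tau' prednK.
rewrite trajP_seqP /Pf'; congr (_ * _).
rewrite (pstate_histP U_tests Ptest_linear qv_sub_Kc); last by rewrite size_rev_tau'.
rewrite readoutZ readout_qv; last by rewrite size_rev_tau'; apply: U_obs.
by rewrite revK histP_mul_Ptest; apply: histP_rcons.
Qed.
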